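(* Let $D$ be an integral domain, $T$ an overring of $D$, $\star$ a semistar operation on $D$ and $\star'$ a semistar operation on $T$. The following are equivalent: (i) $T$ is $(\star,\star')$-linked to $D$; (ii) for every nonzero ideal $I$ of $D$, $I^{\star_f}=D^\star$ implies $(IT)^{\star'_f}=T^{\star'}$; (iii) for every quasi-$\star'_f$-ideal $J$ of $T$ with $J\ne T$, $(J\cap D)^{\star_f}\ne D^\star$; (iv) for every quasi-$\star'_f$-prime ideal $Q$ of $T$, $(Q\cap D)^{\star_f}\ne D^\star$; (v) for every quasi-$\star'_f$-maximal ideal $N$ of $T$, $(N\cap D)^{\star_f}\ne D^\star$.
   Context: Let $D$ be an integral domain with quotient field $K$. $\overline{\mathbf F}(D)$ denotes the set of all nonzero $D$-submodules of $K$ and $\mathbf f(D)$ the set of nonzero finitely generated $D$-submodules of $K$. A semistar operation on $D$ is a map $\star:\overline{\mathbf F}(D)\to\overline{\mathbf F}(D)$, $E\mapsto E^\star$, such that for all $0\ne x\in K$ and $E,F\in\overline{\mathbf F}(D)$: (1) $(xE)^\star=xE^\star$; (2) $E\subseteq F\Rightarrow E^\star\subseteq F^\star$; (3) $E\subseteq E^\star$ and $(E^\star)^\star=E^\star$. $\star_f$ is defined by $E^{\star_f}=\bigcup\{F^\star:F\in\mathbf f(D),F\subseteq E\}$. A nonzero ideal $I$ of $D$ is a quasi-$\star$-ideal if $I^\star\cap D=I$; a quasi-$\star$-prime is a prime quasi-$\star$-ideal; a quasi-$\star$-maximal ideal is a maximal element among proper quasi-$\star$-ideals. An overring of $D$ is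 a ring $T$ with $D\subseteq T\subseteq K$; the same notions are defined on $T$. $T$ is $(\star,\star')$-linked to $D$ if for every nonzero finitely generated ideal $F\subseteq D$ with $F^\star=D^\star$ one has $(FT)^{\star'}=T^{\star'}$. *)

From mathcomp Require Import all_boot all_algebra.
Set Implicit Arguments. Unset Strict Implicit. Unset Printing Implicit Defensive.
Import GRing.Theory.
Local Open Scope ring_scope.

Definition kset (K : Type) := K -> Prop.

Section Defs.
Variable K : fieldType.

Definition ksubset (E F : kset K) : Prop := forall x, E x -> F x.
Definition kcap (E F : kset K) : kset K := fun x => E x /\ F x.

(* R is a subring of K (hence an integral domain) *)
Definition is_subring (R : kset K) : Prop :=
  [/\ R 0, R 1, (forall x y, R x -> R y -> R (x - y)) &
      (forall x y, R x -> R y -> R (x * y))].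

Definition is_quotient_field (D : kset K) : Prop :=
  forall z : K, exists a b, [/\ D a, D b, b != 0 & z = a / b].

Definition is_overring (D T : kset K) : Prop := is_subring T /\ ksubset D T.

Definition is_module (R E : kset K) : Prop :=
  [/\ E 0, (forall x y, E x -> E y -> E (x + y)) &
      (forall r x, R r -> E x -> E (r * x))].

Definition nonzero (E : kset K) : Prop := exists x, E x /\ x != 0.

Definition Fbar (R E : kset K) : Prop := is_module R E /\ nonzero E.

Definition gen (R : kset K) (s : seq K) : kset K :=
  fun x => exists c : nat -> K, (forall i, R (c i)) /\
     x = \sum_(i < size s) c i * s`_i.

Definition ffg (R E : kset K) : Prop :=
  nonzero E /\ exists s : seq K, E = gen R s.

Definition kscale (x : K) (E : kset K) : kset K :=
  fun y => exists e, E e /\ y = x * e.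

(* semistar operation on R (a map Fbar(R) -> Fbar(R); values outside
   Fbar(R) are irrelevant) *)
Definition is_semistar (R : kset K) (st : kset K -> kset K) : Prop :=
  [/\ (forall E, Fbar R E -> Fbar R (st E)),
      (forall x E, x != 0 -> Fbar R E -> st (kscale x E) = kscale x (st E)),
      (forall E F, Fbar R E -> Fbar R F -> ksubset E F -> ksubset (st E) (st F)) &
      (forall E, Fbar R E -> ksubset E (st E) /\ st (st E) = st E)].

Definition star_f (R : kset K) (st : kset K -> kset K) : kset K -> kset K :=
  fun E x => exists F, [/\ ffg R F, ksubset F E & st F x].

Definition is_ideal (R I : kset K) : Prop := ksubset I R /\ is_module R I.
Definition nz_ideal (R I : kset K) : Prop := is_ideal R I /\ nonzero I.

Definition quasi_ideal (R : kset K) (st : kset K -> kset K) (I : kset K) : Prop :=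
  nz_ideal R I /\ kcap (st I) R = I.

Definition is_prime (R P : kset K) : Prop :=
  [/\ is_ideal R P, P <> R &
      forall a b, R a -> R b -> P (a * b) -> P a \/ P b].

Definition quasi_prime (R : kset K) (st : kset K -> kset K) (P : kset K) : Prop :=
  quasi_ideal R st P /\ is_prime R P.

Definition quasi_maximal (R : kset K) (st : kset K -> kset K) (N : kset K) : Prop :=
  [/\ quasi_ideal R st N, N <> R &
      forall J, quasi_ideal R st J -> J <> R -> ksubset N J -> J = N].

Definition extend (T F : kset K) : kset K :=
  fun x => exists (n : nat) (t f : nat -> K),
    [/\ forall i, T (t i), forall i, F (f i) & x = \sum_(i < n) t i * f i].

Definition linked (D T : kset K) (st st' : kset K -> kset K) : Prop :=
  forall F, is_ideal D F -> ffg D F -> st F = st D ->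
    st' (extend T F) = st' T.

End Defs.

(* The point is that star_f is of finite type: 1 lies in E^{star_f} iff it lies in F^star
   for a finitely generated F contained in E, and star_f is a closure (star_f_closed).
   So (i) and (ii) are the same condition, tested on finitely generated ideals, and a
   proper quasi-star'_f-ideal J cannot contract to an I with I^{star_f} = D^star, since
   IT is contained in J and would put 1 in J^{star'_f} ∩ T = J.  Conversely, if
   F^star = D^star but (FT)^{star'} <> T^{star'}, Zorn's lemma yields an ideal of T
   containing FT that is maximal among the ideals J with 1 outside J^{star'_f}; finite
   type makes it quasi-star'_f-maximal, and its contraction contains F, against (v).
   Colon ideals show that quasi-star_f-maximal ideals are prime, whence (iv) -> (v). *)

From mathcomp Require Import all_boot all_algebra.
From mathcomp Require Import boolp classical_sets.
Set Implicit Arguments. Unset Strict Implicit. Unset Printing Implicit Defensive.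
Import GRing.Theory.
Local Open Scope ring_scope.

Section Modules.
Variable K : fieldType.
Implicit Types (R E F : kset K) (s : seq K).

Lemma ksubset_antisym E F : ksubset E F -> ksubset F E -> E = F.
Proof. by move=> EF FE; apply: funext => x; apply: propext; split; [exact: EF|exact: FE]. Qed.

Lemma subring_add R x y : is_subring R -> R x -> R y -> R (x + y).
Proof.
case=> R0 _ RB _ Rx Ry; have := RB x (0 - y) Rx (RB _ _ R0 Ry).
by rewrite sub0r opprK.
Qed.

Lemma subring_module R : is_subring R -> is_module R R.
Proof. by move=> hR; case: (hR) => R0 _ _ RM; split => // x y; apply: subring_add. Qed.

Lemma Fbar_subring R : is_subring R -> Fbar R R.
Proof.
move=> hR; split; first exact: subring_module.
by exists 1; split; [case: hR|exact: oner_neq0].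
Qed.

Lemma module_sum R E n (g : 'I_n -> K) :
  is_module R E -> (forall i, E (g i)) -> E (\sum_(i < n) g i).
Proof. by case=> E0 ED _ hg; apply: big_ind => // i _; exact: hg. Qed.

Lemma ideal1_eq R J : is_ideal R J -> J 1 -> J = R.
Proof.
move=> [JR [_ _ JM]] J1; apply: ksubset_antisym => // x Rx.
by rewrite -(mulr1 x); apply: JM.
Qed.

Lemma gen_module R s : is_subring R -> is_module R (gen R s).
Proof.
move=> hR; case: (hR) => R0 _ _ RM; split.
- by exists (fun _ => 0); split => //; rewrite big1 // => i _; rewrite mul0r.
- move=> x y [c [Rc ->]] [d [Rd ->]]; exists (fun i => c i + d i); split.
    by move=> i; apply: subring_add.
  by rewrite -big_split /=; apply: eq_bigr => i _; rewrite mulrDl.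
- move=> r x Rr [c [Rc ->]]; exists (fun i => r * c i); split => [i|]; first exact: RM.
  by rewrite mulr_sumr; apply: eq_bigr => i _; rewrite mulrA.
Qed.

Lemma gen_sub R E s : is_module R E -> (forall x, x \in s -> E x) -> ksubset (gen R s) E.
Proof.
move=> hE sE x [c [Rc ->]]; apply: (module_sum hE) => i.
by case: hE => _ _ EM; apply: EM => //; apply: sE; exact: mem_nth.
Qed.

Lemma gen_nth R s i : is_subring R -> gen R s s`_i.
Proof.
case=> R0 R1 _ _; exists (fun j => if j == i then 1 else 0).
split; first by move=> j; case: ifP.
case: (ltnP i (size s)) => hi.
- rewrite (bigD1 (Ordinal hi)) //= eqxx mul1r big1 ?addr0 // => j ji.
  by rewrite ifF ?mul0r //; apply/negbTE; apply: contra ji => /eqP ji; apply/eqP/val_inj.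
- rewrite nth_default // big1 // => j _; rewrite ifF ?mul0r //; apply/negbTE.
  by rewrite neq_ltn (leq_trans (ltn_ord j) hi).
Qed.

Lemma gen_mem R s x : is_subring R -> x \in s -> gen R s x.
Proof. by move=> hR xs; rewrite -(nth_index 0 xs); exact: gen_nth. Qed.

Lemma gen_subset R s s' : is_subring R -> {subset s <= s'} -> ksubset (gen R s) (gen R s').
Proof. by move=> hR ss'; apply: (gen_sub (gen_module s' hR)) => x /ss'; apply: gen_mem. Qed.

Lemma gen_mono R R' s : ksubset R R' -> ksubset (gen R s) (gen R' s).
Proof. by move=> RR' x [c [Rc ->]]; exists c; split => // i; apply: RR'. Qed.

Lemma ffg_Fbar R F : is_subring R -> ffg R F -> Fbar R F.
Proof. by move=> hR [Fnz [s eF]]; split => //; rewrite eF; exact: gen_module. Qed.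

Lemma ffg_gen_overring D T s : is_overring D T -> nonzero (gen D s) -> ffg T (gen T s).
Proof.
move=> [_ DT] [x [Dx x0]]; split; last by exists s.
by exists x; split => //; exact: (gen_mono DT).
Qed.

Lemma kscale_gen R b s : kscale b (gen R s) = gen R (map (fun z => b * z) s).
Proof.
have scale_sum (c : nat -> K) : b * \sum_(i < size s) c i * s`_i =
                   \sum_(i < size (map (fun z => b * z) s)) c i * (map (fun z => b * z) s)`_i.
  by rewrite size_map mulr_sumr; apply: eq_bigr => i _; rewrite (nth_map 0) // mulrCA.
apply: ksubset_antisym => y.
- by move=> [_ [[c [Rc ->]] ->]]; exists c; split => //; exact: scale_sum.
- move=> [c [Rc ->]]; exists (\sum_(i < size s) c i * s`_i).
  by split; [exists c|rewrite scale_sum].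
Qed.

Lemma ffg_kscale R b F : b != 0 -> ffg R F -> ffg R (kscale b F).
Proof.
move=> b0 [[x [Fx x0]] [s eF]]; split.
  by exists (b * x); split; [exists x|rewrite mulf_neq0].
by exists (map (fun z => b * z) s); rewrite eF kscale_gen.
Qed.

Lemma extend_gen D T s : is_subring D -> is_overring D T -> extend T (gen D s) = gen T s.
Proof.
move=> hD [hT DT]; have [_ _ GM] := gen_module s hT.
apply: ksubset_antisym => x.
- move=> [n [t [f [Tt Gf ->]]]]; apply: (module_sum (gen_module s hT)) => i.
  by apply: GM => //; exact: (gen_mono DT).
- move=> [c [Tc ->]]; exists (size s), c, (fun i => s`_i); split => // i.
  exact: gen_nth.
Qed.

Lemma extend_mono T E F : ksubset E F -> ksubset (extend T E) (extend T F).
Proof. by move=> EF x [n [t [f [Tt Ef ->]]]]; exists n, t, f; split => // i; apply: EF. Qed.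

Lemma extend_sub T E J : is_module T J -> ksubset E J -> ksubset (extend T E) J.
Proof.
move=> hJ EJ x [n [t [f [Tt Ef ->]]]]; apply: (module_sum hJ) => i.
by case: hJ => _ _ JM; apply: JM => //; exact: EJ.
Qed.

Lemma kcap_nz_ideal (D T J : kset K) : is_subring D -> is_quotient_field D -> ksubset D T ->
  nz_ideal T J -> nz_ideal D (kcap J D).
Proof.
move=> hD hQ DT [[JT [J0 Jadd Jsc]] [x [Jx x0]]]; case: (hD) => D0 _ _ DM; split.
  split; first by move=> y [].
  split; first by split.
  - by move=> y z [Jy Dy] [Jz Dz]; split; [exact: Jadd|exact: subring_add].
  - by move=> r y Dr [Jy Dy]; split; [apply: Jsc => //; exact: DT|exact: DM].
have [a [b [Da Db b0 exab]]] := hQ x.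
exists a; split; last by apply: contra x0 => /eqP a0; rewrite exab a0 mul0r.
split => //; have -> : a = b * x by rewrite exab mulrC divfK.
by apply: Jsc => //; exact: DT.
Qed.

Definition adjoin R A y : kset K := fun z => exists n u, [/\ A n, R u & z = n + y * u].

Lemma adjoin_ideal R A y : is_subring R -> is_ideal R A -> R y -> is_ideal R (adjoin R A y).
Proof.
move=> hR [AR [A0 Aadd Asc]] Ry; case: (hR) => _ _ _ RM; split.
  by move=> _ [n [u [An Ru ->]]]; apply: subring_add => //; [exact: AR|exact: RM].
split; first by exists 0, 0; split; rewrite ?mulr0 ?addr0 //; case: hR.
- move=> _ _ [n [u [An Ru ->]]] [n' [u' [An' Ru' ->]]].
  exists (n + n'), (u + u'); split; [exact: Aadd|exact: subring_add|].
  by rewrite mulrDr addrACA.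
- move=> r _ Rr [n [u [An Ru ->]]]; exists (r * n), (r * u); split; [exact: Asc|exact: RM|].
  by rewrite mulrDr mulrCA.
Qed.

Lemma adjoin_sup R A y : is_subring R -> ksubset A (adjoin R A y).
Proof. by move=> [R0 _ _ _] n An; exists n, 0; split; rewrite ?mulr0 ?addr0. Qed.

Lemma adjoin_mem R A y : is_subring R -> is_module R A -> adjoin R A y y.
Proof. by move=> [_ R1 _ _] [A0 _ _]; exists 0, 1; split; rewrite ?mulr1 ?add0r. Qed.

Lemma adjoin_sub R A M y : is_module R M -> ksubset A M -> M y -> ksubset (adjoin R A y) M.
Proof.
move=> [_ Madd Msc] AM My _ [n [u [An Ru ->]]].
by apply: Madd; [exact: AM|rewrite mulrC; exact: Msc].
Qed.

Definition colon R N b : kset K := fun y => R y /\ N (b * y).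

Lemma colon_ideal R N b : is_subring R -> is_module R N -> is_ideal R (colon R N b).
Proof.
move=> hR [N0 Nadd Nsc]; case: (hR) => R0 _ _ RM; split; first by move=> y [].
split; first by split; rewrite ?mulr0.
- by move=> x y [Rx Nx] [Ry Ny]; split; [exact: subring_add|rewrite mulrDr; exact: Nadd].
- by move=> r x Rr [Rx Nx]; split; [exact: RM|rewrite mulrCA; exact: Nsc].
Qed.

Lemma colon_sup R N b : is_ideal R N -> R b -> ksubset N (colon R N b).
Proof. by move=> [NR [_ _ Nsc]] Rb y Ny; split; [exact: NR|exact: Nsc]. Qed.

End Modules.

Section Semistar.
Variables (K : fieldType) (R : kset K) (st : kset K -> kset K).
Hypotheses (hR : is_subring R) (hst : is_semistar R st).
Implicit Types (A E F G I : kset K).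

Lemma st_Fbar E : Fbar R E -> Fbar R (st E).
Proof. by case: hst => h _ _ _; apply: h. Qed.

Lemma st_module E : Fbar R E -> is_module R (st E).
Proof. by move=> /st_Fbar []. Qed.

Lemma st_mono E F : Fbar R E -> Fbar R F -> ksubset E F -> ksubset (st E) (st F).
Proof. by case: hst => _ _ h _; apply: h. Qed.

Lemma st_infl E : Fbar R E -> ksubset E (st E).
Proof. by case: hst => _ _ _ h /h []. Qed.

Lemma st_idem E : Fbar R E -> st (st E) = st E.
Proof. by case: hst => _ _ _ h /h []. Qed.

Lemma st_kscale b E : b != 0 -> Fbar R E -> st (kscale b E) = kscale b (st E).
Proof. by case: hst => _ h _ _; apply: h. Qed.

Lemma st_ring_sub G : Fbar R G -> st G 1 -> ksubset (st R) (st G).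
Proof.
move=> FG G1; rewrite -(st_idem FG).
apply: (st_mono (Fbar_subring hR) (st_Fbar FG)) => r Rr.
by rewrite -(mulr1 r); case: (st_module FG) => _ _; apply.
Qed.

Lemma st_ring1 : st R 1.
Proof. by apply: (st_infl (Fbar_subring hR)); case: hR. Qed.

Lemma star_f_mono E F : ksubset E F -> ksubset (star_f R st E) (star_f R st F).
Proof. by move=> EF x [G [Gf GE Gx]]; exists G; split => // y /GE /EF. Qed.

Lemma star_f_st E F : Fbar R F -> ksubset E F -> ksubset (star_f R st E) (st F).
Proof.
move=> FF EF x [G [Gf GE Gx]].
by apply: (st_mono (ffg_Fbar hR Gf) FF _ Gx) => y /GE /EF.
Qed.

Lemma star_f_ffg E : ffg R E -> star_f R st E = st E.
Proof.
move=> Ef; apply: ksubset_antisym; first exact: star_f_st (ffg_Fbar hR Ef) _.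
by move=> x Ex; exists E; split.
Qed.

Lemma star_f_infl E : Fbar R E -> ksubset E (star_f R st E).
Proof.
move=> [Emod [e [Ee e0]]] x Ex.
have Gsub : ksubset (gen R [:: e; x]) E.
  by apply: gen_sub => // z; rewrite !inE => /orP [] /eqP ->.
have Gf : ffg R (gen R [:: e; x]).
  by split; [exists e; split => //; apply: gen_mem; rewrite ?mem_head|exists [:: e; x]].
exists (gen R [:: e; x]); split => //.
by apply: (st_infl (ffg_Fbar hR Gf)); apply: gen_mem; rewrite // !inE eqxx orbT.
Qed.

Lemma star_f_eq_st I : ksubset I R -> star_f R st I = st R <-> star_f R st I 1.
Proof.
move=> IR; split=> [-> | [G [Gf GI G1]]].
  exact: st_ring1.
have FG := ffg_Fbar hR Gf.
apply: ksubset_antisym; first exact: star_f_st (Fbar_subring hR) IR.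
by move=> x /(st_ring_sub FG G1) Gx; exists G.
Qed.

Lemma st_eq_ring_ffg G : ffg R G -> ksubset G R -> st G = st R <-> st G 1.
Proof. by move=> Gf GR; rewrite -(star_f_ffg Gf); exact: star_f_eq_st. Qed.

Lemma star_f_kscale b E y :
  b != 0 -> star_f R st E y -> star_f R st (kscale b E) (b * y).
Proof.
move=> b0 [G [Gf GE Gy]]; exists (kscale b G); split; first exact: ffg_kscale.
  by move=> z [e [Ge ->]]; exists e; split => //; exact: GE.
by rewrite st_kscale //; [exists y|exact: ffg_Fbar].
Qed.

Lemma star_f_fin A (t : seq K) : Fbar R A -> (forall z, z \in t -> star_f R st A z) ->
  exists m : seq K, [/\ ffg R (gen R m), ksubset (gen R m) A & forall z, z \in t -> st (gen R m) z].
Proof.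
move=> [Amod [a [Aa a0]]]; elim: t => [|x t IH] tA.
  exists [:: a]; split => //; last by apply: gen_sub => // z; rewrite inE => /eqP ->.
  by split; [exists a; split => //; apply: gen_mem; rewrite ?mem_head|exists [:: a]].
have [|m [mf mA mt]] := IH; first by move=> z zt; apply: tA; rewrite inE zt orbT.
have [G [Gf GA Gx]] := tA x (mem_head _ _); case: (Gf) => _ [s eG]; subst G.
have sub_cat s1 s2 : ksubset (gen R s1) (gen R (s1 ++ s2)) /\ ksubset (gen R s2) (gen R (s1 ++ s2)).
  by split; apply: gen_subset => // z zs; rewrite mem_cat zs ?orbT.
have m'f : ffg R (gen R (m ++ s)).
  split; last by exists (m ++ s).
  by case: mf => [[z [mz z0]] _]; exists z; split => //; apply: (sub_cat m s).1.
exists (m ++ s); split => //.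
  apply: gen_sub => // z; rewrite mem_cat => /orP [zm|zs]; first exact/mA/gen_mem.
  exact/GA/gen_mem.
have FM := ffg_Fbar hR m'f.
move=> z; rewrite inE => /orP [/eqP ->|/mt].
  by move: Gx; apply: (st_mono (ffg_Fbar hR Gf) FM (sub_cat m s).2).
by apply: (st_mono (ffg_Fbar hR mf) FM (sub_cat m s).1).
Qed.

Lemma star_f_module A : Fbar R A -> is_module R (star_f R st A).
Proof.
move=> FA; split.
- by apply: (star_f_infl FA); case: FA => [[]].
- move=> x y Ax Ay; have [|m [mf mA mxy]] := star_f_fin (t := [:: x; y]) FA.
    by move=> z; rewrite !inE => /orP [] /eqP ->.
  exists (gen R m); split => //.
  by case: (st_module (ffg_Fbar hR mf)) => _ + _; apply; apply: mxy; rewrite !inE eqxx ?orbT.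
- move=> r x Rr [G [Gf GA Gx]]; exists G; split => //.
  by case: (st_module (ffg_Fbar hR Gf)) => _ _; apply.
Qed.

Lemma star_f_closed A E : Fbar R A ->
  ksubset E (star_f R st A) -> ksubset (star_f R st E) (star_f R st A).
Proof.
move=> FA EA x [H [Hf HE Hx]]; case: (Hf) => _ [t eH]; subst H.
have [|m [mf mA mt]] := star_f_fin (t := t) FA.
  by move=> z zt; apply: EA; apply: HE; exact: gen_mem.
have FM := ffg_Fbar hR mf.
have HM : ksubset (gen R t) (st (gen R m)) by apply: gen_sub (st_module FM) mt.
exists (gen R m); split => //; rewrite -(st_idem FM).
by move: Hx; apply: (st_mono (ffg_Fbar hR Hf) (st_Fbar FM) HM).
Qed.

End Semistar.

Local Open Scope classical_set_scope.

Lemma chain_seq_bound (U : eqType) (Fm : set (set U)) X0 (t : seq U) :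
  total_on Fm subset -> Fm X0 -> (forall z, z \in t -> (\bigcup_(X in Fm) X) z) ->
  exists2 X, Fm X & forall z, z \in t -> X z.
Proof.
move=> Ftot FX0; elim: t => [|x t IH] tU; first by exists X0.
have [|X FX tX] := IH; first by move=> z zt; apply: tU; rewrite inE zt orbT.
have [Y FY Yx] := tU x (mem_head _ _).
have [XY|YX] := Ftot X Y FX FY.
- by exists Y => // z; rewrite inE => /orP [/eqP ->|/tX /XY].
- by exists X => // z; rewrite inE => /orP [/eqP ->|/tX]; [exact: YX|].
Qed.

Section QuasiMaximal.
Variables (K : fieldType) (T : kset K) (st : kset K -> kset K).
Hypotheses (hT : is_subring T) (hst : is_semistar T st).
Implicit Types (A B E J N : kset K).

Definition star_f_proper J := is_ideal T J /\ ~ star_f T st J 1.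

Lemma bigcup_chain_ideal (Fm : set (set K)) : total_on Fm subset -> Fm !=set0 ->
  (forall X, Fm X -> is_ideal T X) -> is_ideal T (\bigcup_(X in Fm) X).
Proof.
move=> Ftot [X0 FX0] Fid; split; first by move=> x [X /Fid [XT _]]; apply: XT.
split; first by exists X0 => //; have [_ []] := Fid X0 FX0.
- move=> x y [X FX Xx] [Y FY Yy].
  have [XY|YX] := Ftot X Y FX FY.
  + by exists Y => //; have [_ [_ + _]] := Fid Y FY; apply; first exact: XY.
  + by exists X => //; have [_ [_ + _]] := Fid X FX; apply => //; exact: YX.
- by move=> r x Tr [X FX Xx]; exists X => //; have [_ [_ _]] := Fid X FX; apply.
Qed.

Lemma star_f_bigcup_chain (Fm : set (set K)) x : total_on Fm subset ->
  (forall X, Fm X -> is_module T X) ->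
  star_f T st (\bigcup_(X in Fm) X) x -> exists2 X, Fm X & star_f T st X x.
Proof.
move=> Ftot Fmod [H [Hf HU Hx]]; case: (Hf) => [[h [Hh _]] [t eH]]; subst H.
have [X0 FX0 _] := HU h Hh.
have [X FX tX] := chain_seq_bound Ftot FX0 (fun z zt => HU z (gen_mem hT zt)).
by exists X => //; exists (gen T t); split => //; apply: gen_sub (Fmod X FX) tX.
Qed.

Lemma bigcup_star_f_proper (Fm : set (set K)) : total_on Fm subset -> Fm !=set0 ->
  (forall X, Fm X -> star_f_proper X) -> star_f_proper (\bigcup_(X in Fm) X).
Proof.
move=> Ftot Fm0 Fp; split; first by apply: bigcup_chain_ideal => // X /Fp [[]].
move=> /(star_f_bigcup_chain Ftot) [X|X FX X1]; first by move=> /Fp [[]].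
by have [_] := Fp X FX; apply.
Qed.

Lemma maximal_star_f_proper_quasi_maximal A : nonzero A -> star_f_proper A ->
  (forall B, star_f_proper B -> ksubset A B -> B = A) -> quasi_maximal T (star_f T st) A.
Proof.
move=> Anz [[AT Amod] A1] Amax.
have FA : Fbar T A by [].
have Aq : quasi_ideal T (star_f T st) A.
  split=> //; apply: ksubset_antisym => y; last first.
    by move=> Ay; split; [exact: star_f_infl|exact: AT].
  move=> [Ay Ty]; suff <- : adjoin T A y = A by exact: adjoin_mem.
  apply: Amax; last exact: adjoin_sup.
  split; first exact: adjoin_ideal.
  move=> B1; apply: A1; move: B1; apply: (star_f_closed hT hst FA).
  by apply: adjoin_sub; [exact: star_f_module|exact: star_f_infl|].
split => //.
  by move=> AeT; apply: A1; apply: star_f_infl => //; rewrite AeT; case: hT.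
move=> J [[Jid Jnz] Jq] JnT AJ; apply: Amax => //; split => // J1.
by apply/JnT/(ideal1_eq Jid); rewrite -Jq; split => //; case: hT.
Qed.

Lemma quasi_maximal_sup E : is_ideal T E -> nonzero E -> ~ star_f T st E 1 ->
  exists2 N, quasi_maximal T (star_f T st) N & ksubset E N.
Proof.
move=> Eid Enz E1.
(* set0 is admitted so that the union of the empty chain is an upper bound. *)
pose P (J : set K) := J = set0 \/ star_f_proper J /\ ksubset E J.
have [A [PA Amax]] : exists A, P A /\ forall B, A `<` B -> ~ P B.
  apply: Zorn_bigcup => Fm FmP Ftot.
  pose Fm' X := Fm X /\ star_f_proper X /\ ksubset E X.
  have -> : \bigcup_(X in Fm) X = \bigcup_(X in Fm') X.
    apply: ksubset_antisym => x [X FX Xx]; exists X => //; last by case: FX.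
    by case: (FmP X FX) => [X0|//]; move: Xx; rewrite X0.
  have [[X FX]|Fm'0] := pselect (Fm' !=set0); last first.
    by left; apply: ksubset_antisym => x // [X FX _]; apply: Fm'0; exists X.
  right; split; last by move=> x Ex; exists X => //; case: FX => _ [_]; apply.
  apply: bigcup_star_f_proper; [|by exists X|by move=> Y [_ []]].
  by move=> Y Z [FY _] [FZ _]; exact: Ftot.
have [Ap EA] : star_f_proper A /\ ksubset E A.
  case: PA => // A0; exfalso; apply: (Amax E); last by right; split.
  by rewrite A0; split => // /(_ 0); apply; case: Eid => _ [].
exists A => //; apply: maximal_star_f_proper_quasi_maximal => //.
  by case: Enz => x [Ex x0]; exists x; split => //; exact: EA.
move=> B Bp AB; apply: contrapT => BnA; apply: (Amax B); last by right; split => // x /EA /AB.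
by split => // BA; apply: BnA; exact: ksubset_antisym.
Qed.

Lemma colon_quasi_ideal N b : quasi_ideal T (star_f T st) N -> T b -> b != 0 ->
  quasi_ideal T (star_f T st) (colon T N b).
Proof.
move=> [[[NT Nmod] Nnz] Nq] Tb b0.
have [CT Cmod] := colon_ideal b hT Nmod.
have NC := colon_sup (conj NT Nmod) Tb.
have Cnz : nonzero (colon T N b) by case: Nnz => x [Nx x0]; exists x; split => //; exact: NC.
split => //; apply: ksubset_antisym => y; last first.
  by move=> Cy; split; [exact: (star_f_infl hT hst (conj Cmod Cnz))|exact: CT].
move=> [Cy Ty]; split => //; rewrite -Nq; split; last by case: hT => _ _ _; apply.
by move: (star_f_kscale hT hst b0 Cy); apply: star_f_mono => _ [e [[_ Ne] ->]].
Qed.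

Lemma quasi_maximal_prime N : quasi_maximal T (star_f T st) N -> quasi_prime T (star_f T st) N.
Proof.
move=> [Nq NnT Nmax]; split => //; have [[[NT Nmod] _] _] := Nq.
split => // a b Ta Tb Nab; have [Nb|Nb] := pselect (N b); [by right|left].
have b0 : b != 0 by apply/eqP => b0; apply: Nb; rewrite b0; case: Nmod.
have CN : colon T N b = N.
  apply: Nmax; [exact: colon_quasi_ideal| |exact: colon_sup].
  move=> CT; have : colon T N b 1 by rewrite CT; case: hT.
  by case=> _; rewrite mulr1.
have : colon T N b a by split => //; rewrite mulrC.
by rewrite CN.
Qed.

End QuasiMaximal.

Section Linkage.
Variables (K : fieldType) (D T : kset K) (st st' : kset K -> kset K).
Hypotheses (hD : is_subring D) (hDT : is_overring D T).
Hypotheses (hst : is_semistar D st) (hst' : is_semistar T st').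

Let hT : is_subring T := hDT.1.
Let DT : ksubset D T := hDT.2.

Lemma extend_sub_overring I : ksubset I D -> ksubset (extend T I) T.
Proof. by move=> ID; apply: extend_sub (subring_module hT) _ => x /ID /DT. Qed.

Lemma linked_star_f_extend : linked D T st st' ->
  forall I, nz_ideal D I -> star_f D st I = st D -> star_f T st' (extend T I) = st' T.
Proof.
move=> hl I [[ID _] _] /(star_f_eq_st hD hst ID) [G [Gf GI G1]].
apply/(star_f_eq_st hT hst' (extend_sub_overring ID)).
have GD : ksubset G D by move=> x /GI /ID.
case: (Gf) => Gnz [s eG]; subst G.
have := hl (gen D s) (conj GD (gen_module s hD)) Gf ((st_eq_ring_ffg hD hst Gf GD).2 G1).
rewrite extend_gen // => GT; exists (gen T s); split; first exact: (ffg_gen_overring hDT Gnz).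
  by rewrite -(extend_gen s hD hDT); exact: extend_mono.
by rewrite GT; exact: st_ring1.
Qed.

Lemma star_f_extend_linked :
  (forall I, nz_ideal D I -> star_f D st I = st D -> star_f T st' (extend T I) = st' T) ->
  linked D T st st'.
Proof.
move=> hii F [FD Fmod] Ff eF; have := hii F (conj (conj FD Fmod) Ff.1).
case: (Ff) => Fnz [s eFs]; subst F.
rewrite extend_gen // star_f_ffg // star_f_ffg //; last exact: (ffg_gen_overring hDT Fnz).
by apply.
Qed.

Lemma star_f_extend_quasi_contraction : is_quotient_field D ->
  (forall I, nz_ideal D I -> star_f D st I = st D -> star_f T st' (extend T I) = st' T) ->
  forall J, quasi_ideal T (star_f T st') J -> J <> T -> star_f D st (kcap J D) <> st D.
Proof.
move=> hQ hii J [Jnz Jq] JnT /(hii _ (kcap_nz_ideal hD hQ DT Jnz)) eT.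
have [[JT Jmod] _] := Jnz.
apply/JnT/(ideal1_eq (conj JT Jmod)); rewrite -Jq; split; last by case: hT.
move: (st_ring1 hT hst'); rewrite -eT; apply: star_f_mono.
by apply: extend_sub Jmod _ => x [].
Qed.

Lemma quasi_maximal_contraction_linked :
  (forall N, quasi_maximal T (star_f T st') N -> star_f D st (kcap N D) <> st D) ->
  linked D T st st'.
Proof.
move=> hv F [FD _] Ff eF; case: (Ff) => Fnz [s eFs]; subst F.
rewrite extend_gen //; apply: contrapT => neT.
have GT : ksubset (gen T s) T.
  by apply: gen_sub (subring_module hT) _ => x /(gen_mem hD) /FD /DT.
have Gf := ffg_gen_overring hDT Fnz.
have [|N Nqm GN] := quasi_maximal_sup hT hst' (conj GT (gen_module s hT)) Gf.1.
  by rewrite star_f_ffg // -(st_eq_ring_ffg hT hst' Gf GT).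
apply: (hv N Nqm); apply/(star_f_eq_st hD hst (fun x => @proj2 _ _)).
exists (gen D s); split => //; last exact: (st_eq_ring_ffg hD hst Ff FD).1.
by move=> z Gz; split; [apply: GN; exact: (gen_mono DT)|exact: FD].
Qed.

End Linkage.

Theorem proposition3p2 (K : fieldType) (D T : kset K)
  (st st' : kset K -> kset K) :
  is_subring D -> is_quotient_field D -> is_overring D T ->
  is_semistar D st -> is_semistar T st' ->
  let i := linked D T st st' in
  let ii := forall I, nz_ideal D I -> star_f D st I = st D ->
              star_f T st' (extend T I) = st' T in
  let iii := forall J, quasi_ideal T (star_f T st') J -> J <> T ->
              star_f D st (kcap J D) <> st D in
  let iv := forall Q, quasi_prime T (star_f T st') Q ->
              star_f D st (kcap Q D) <> st D in
  let v := forall N, quasi_maximal T (star_f T st') N ->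
              star_f D st (kcap N D) <> st D in
  [/\ i <-> ii, i <-> iii, i <-> iv & i <-> v].
Proof.
move=> hD hQ hDT hst hst' i ii iii iv v.
have i_ii : i -> ii by exact: linked_star_f_extend.
have ii_i : ii -> i by exact: star_f_extend_linked.
have ii_iii : ii -> iii by exact: star_f_extend_quasi_contraction.
have iii_iv : iii -> iv by move=> h Q [Qq [_ QnT _]]; exact: h.
have iv_v : iv -> v by move=> h N /(quasi_maximal_prime hDT.1 hst'); exact: h.
have v_i : v -> i by exact: quasi_maximal_contraction_linked.
by split; split; tauto.
Qed.
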